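(* Let $F=(A,R)$ be an abstract argumentation framework and $S\subseteq A$. Then $S$ is admissible in $F$ if and only if either $S=\emptyset$, or $S=S_1\cup S_2$ where $S_1$ is an initial set of $F$ and $S_2$ is an admissible set of the reduct $F^{S_1}$.
   Context: An abstract argumentation framework is a pair $F=(A,R)$ with $A$ a finite set of arguments and $R\subseteq A\times A$ (write $a\to b$ for $(a,b)\in R$). For $S\subseteq A$: $S^+=\{a\in A\mid \exists b\in S: b\to a\}$, $S^-=\{a\in A\mid \exists b\in S: a\to b\}$. $S$ is conflict-free if there are no $a,b\in S$ with $a\to b$. $S$ defends $b$ if for every $a$ with $a\to b$ there is $c\in S$ with $c\to a$. $S$ is admissible if it is conflict-free and defends all its elements. An initial set of $F$ is a non-empty admissible set $S$ such that no non-empty admissible $S'\subsetneq S$ exists. For $X\subseteq A$, $F|_X=(X,R\cap(X\times X))$. The $S$-reduct of $F$ is $F^{S}=F|_{A\setminus(S\cup S^+)}$. *)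

From mathcomp Require Import all_boot.
Set Implicit Arguments. Unset Strict Implicit. Unset Printing Implicit Defensive.

(* An abstract argumentation framework F = (A, R) over a finite universe T of
   possible arguments: A : {set T} is the (finite) set of arguments and
   R : rel T the attack relation; only attacks between members of A count,
   i.e. the attack relation of F is R ∩ (A × A). *)
Record AF (T : finType) := mkAF { args : {set T}; att : rel T }.

Section AFDefs.
Variable T : finType.
Implicit Types (F : AF T) (S : {set T}).

Definition attacks F (a b : T) : bool :=
  [&& a \in args F, b \in args F & att F a b].

Definition splus F S : {set T} :=
  [set a in args F | [exists b in S, attacks F b a]].

Definition sminus F S : {set T} :=
  [set a in args F | [exists b in S, attacks F a b]].

Definition conflict_free F S : Prop :=
  forall a b, a \in S -> b \in S -> ~~ attacks F a b.

Definition defends F S (b : T) : Prop :=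
  forall a, attacks F a b -> exists2 c, c \in S & attacks F c a.

Definition admissible F S : Prop :=
  S \subset args F /\ conflict_free F S /\ (forall b, b \in S -> defends F S b).

Definition initial F S : Prop :=
  admissible F S /\ S != set0 /\
  ~ (exists S', [/\ S' != set0, admissible F S' & S' \proper S]).

Definition restrict F (X : {set T}) : AF T :=
  mkAF X (fun a b => [&& a \in X, b \in X & attacks F a b]).

Definition reduct F S : AF T :=
  restrict F (args F :\: (S :|: splus F S)).

End AFDefs.

(* Forward direction: a non-empty admissible set S contains an initial set S1
   (a minimal non-empty admissible subset, which exists by finiteness), and
   S \ S1 is admissible in the reduct F^S1: conflict-freeness of S keeps it out
   of S1^+, and a defender in S of an element against an attacker living in
   the reduct cannot lie in S1, because nothing in the reduct is attacked by
   S1.  Backward direction: an attacker of an element of S2 is either attacked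
   by S1 or lies in the reduct, where S2 defends against it; only the
   admissibility of S1 is used, not its minimality. *)

From Stdlib Require Import Classical.
From mathcomp Require Import all_boot.

Set Implicit Arguments.
Unset Strict Implicit.
Unset Printing Implicit Defensive.

Section Reduct.
Variable T : finType.
Implicit Types (F : AF T) (S : {set T}).

Lemma attacks_args F a b : attacks F a b -> (a \in args F) && (b \in args F).
Proof. by case/and3P=> -> ->. Qed.

Lemma mem_args_reduct F S x :
  (x \in args (reduct F S)) =
  [&& x \notin S, ~~ [exists b in S, attacks F b x] & x \in args F].
Proof. by rewrite !inE negb_or; case: (x \in args F); rewrite ?andbT ?andbF. Qed.

Lemma reduct_unattacked F S c x :
  c \in S -> x \in args (reduct F S) -> ~~ attacks F c x.
Proof.
move=> cS; rewrite mem_args_reduct negb_exists_in => /and3P[_ /forall_inP noS _].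
exact: noS.
Qed.

Lemma attacks_reduct F S a b :
  attacks (reduct F S) a b =
  [&& a \in args (reduct F S), b \in args (reduct F S) & attacks F a b].
Proof. by rewrite /attacks /=; case: (a \in _); case: (b \in _). Qed.

Lemma attacks_reductW F S a b : attacks (reduct F S) a b -> attacks F a b.
Proof. by rewrite attacks_reduct => /and3P[]. Qed.

Lemma admissible_set0 F : admissible F set0.
Proof. by split; [exact: sub0set | split=> [a b|b]; rewrite in_set0]. Qed.

Lemma initial_sub_admissible F S :
  admissible F S -> S != set0 -> exists2 S1, initial F S1 & S1 \subset S.
Proof.
elim: {S}_.+1 {-2}S (ltnSn #|S|) => // n IH S ltSn admS S0.
case: (classic (exists S', [/\ S' != set0, admissible F S' & S' \proper S]))
  => [[S' [S'0 admS' ltS'S]] | minS]; last by exists S.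
have [S1 iS1 S1S'] := IH S' (leq_trans (proper_card ltS'S) ltSn) admS' S'0.
by exists S1 => //; apply: subset_trans S1S' (proper_sub ltS'S).
Qed.

Lemma admissible_reduct_setD F S S1 :
  admissible F S -> S1 \subset S -> admissible (reduct F S1) (S :\: S1).
Proof.
case=> SA [cfS defS] S1S.
have S_reduct x : x \in S :\: S1 -> x \in args (reduct F S1).
  case/setDP=> xS xS1; rewrite mem_args_reduct xS1 (subsetP SA _ xS) andbT.
  by rewrite negb_exists_in; apply/forall_inP=> c /(subsetP S1S) /cfS; apply.
split; [|split].
- by apply/subsetP.
- move=> a b /setDP[aS _] /setDP[bS _].
  by apply/negP=> /attacks_reductW; apply/negP; apply: cfS.
- move=> b /setDP[bS _] a; rewrite attacks_reduct => /and3P[aR _ ab].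
  have [c cS ca] := defS b bS a ab.
  have cS1 : c \notin S1 by apply: contraL ca => cS1; apply: reduct_unattacked aR.
  have cSD : c \in S :\: S1 by rewrite inE cS1.
  by exists c; rewrite // attacks_reduct S_reduct // aR.
Qed.

Lemma admissible_setU_reduct F S1 S2 :
  admissible F S1 -> admissible (reduct F S1) S2 -> admissible F (S1 :|: S2).
Proof.
case=> S1A [cf1 def1] [S2R [cf2 def2]].
have S2_reduct x : x \in S2 -> x \in args (reduct F S1) := subsetP S2R x.
have S1_S2 a b : a \in S1 -> b \in S2 -> ~~ attacks F a b.
  by move=> aS1 /S2_reduct; apply: reduct_unattacked.
split; [|split].
- by rewrite subUset S1A (subset_trans S2R (subsetDl _ _)).
- move=> a b /setUP[aS1|aS2] /setUP[bS1|bS2].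
  + exact: cf1.
  + exact: S1_S2.
  + by apply/negP=> /(def1 b bS1)[c cS1]; apply/negP; apply: S1_S2.
  + by have := cf2 a b aS2 bS2; rewrite attacks_reduct !S2_reduct.
- move=> b /setUP[bS1|bS2] a ab.
  + by have [c cS1 ca] := def1 b bS1 a ab; exists c; rewrite ?inE ?cS1.
  + case: (boolP [exists c in S1, attacks F c a]) => [/exists_inP[c cS1 ca]|noS1].
      by exists c; rewrite ?inE ?cS1.
    have aS1 : a \notin S1 by apply: contraL ab => aS1; apply: S1_S2 aS1 bS2.
    have aR : a \in args (reduct F S1).
      by rewrite mem_args_reduct aS1 noS1; case/andP: (attacks_args ab).
    have abR : attacks (reduct F S1) a b by rewrite attacks_reduct aR S2_reduct.
    have [c cS2 ca] := def2 b bS2 a abR.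
    by exists c; [rewrite inE cS2 orbT | apply: attacks_reductW ca].
Qed.

End Reduct.

Theorem theorem1 (T : finType) (F : AF T) (S : {set T}) :
  S \subset args F ->
  (admissible F S <->
   (S = set0 \/
    exists S1 S2 : {set T},
      [/\ S = S1 :|: S2, initial F S1 & admissible (reduct F S1) S2])).
Proof.
move=> _; split=> [admS | [-> | [S1 [S2 [-> iS1 admS2]]]]].
- have [-> | S0] := eqVneq S set0; [by left | right].
  have [S1 iS1 S1S] := initial_sub_admissible admS S0.
  exists S1, (S :\: S1); split => //; last exact: admissible_reduct_setD.
  by rewrite setDE setUIr setUCr setIT (setUidPr S1S).
- exact: admissible_set0.
- by case: iS1 => admS1 _; apply: admissible_setU_reduct.
Qed.
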